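(* Let $\rho$ be a density operator with purity $\wp=\operatorname{tr}(\rho^2)$ and $O$ a traceless Hermitian operator on $\mathcal H$, and let $V_\triangle(O)=\max_\rho V_\triangle(O,\rho)$. Then $$V_\triangle(O,\rho)\le\frac{2(d+1)}{d(d+2)}\sqrt{2^{-\tilde M_2(\rho)}d\wp\|\Xi_O\|_4^4},\qquad V_\triangle(O,\rho)\le\frac{2(d+1)}{d+2}\|\Xi_{\mathring\rho}\|_\infty^2\|O\|_2^2,$$ $$V_\triangle(O)\le\frac{2(d+1)}{d(d+2)}\|\Xi_O^2\|_{[d]}\le\frac{2(d+1)}{d+2}\|O\|_2^2.$$ If moreover $O=|\phi\rangle\langle\phi|-\mathbb 1/d$ for a pure state $|\phi\rangle$, then $V_\triangle(O)<\frac{2^{1-M_2(\phi)/2}(d+1)}{d+2}$ and $$2^{1-M_2(\phi)}-\frac5d<V_\triangle(O,\phi)=\frac{[2^{1-M_2(\phi)}d^2-3d+1](d+1)}{d^2(d+2)}<2^{1-M_2(\phi)}-\frac2d.$$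
   Context: $n\ge1$, $d=2^n$, $\mathcal H=(\mathbb C^2)^{\otimes n}$. Let $\overline{\mathcal P}_n=\{I,X,Y,Z\}^{\otimes n}$. For operators $A,B$ define functions on $\overline{\mathcal P}_n$ regarded as vectors in $\mathbb R^{d^2}$ (with $\ell_p$ norms and standard inner product): $\Xi_A(P)=\operatorname{tr}(AP)$, $\Xi_{A,B}(P)=\operatorname{tr}(AP)\operatorname{tr}(BP)$, $\tilde\Xi_{A,B}(P)=\operatorname{tr}(APBP)$. $V_\triangle(O,\rho)=\frac{d+1}{d(d+2)}\bigl(\|\Xi_{\rho,O}\|_2^2+\tilde\Xi_{\rho,O}\cdot\Xi_{\rho,O}\bigr)$; $V_\triangle(O,\phi)=V_\triangle(O,|\phi\rangle\langle\phi|)$. $\mathring\rho=\rho-\mathbb 1/d$. $\|\Xi_O^2\|_{[d]}$ is the sum of the $d$ largest values of $\Xi_O(P)^2$. $\tilde M_2(\rho)=-\log_2\frac{\|\Xi_\rho\|_4^4}{d\operatorname{tr}(\rho^2)}$, and for a pure state $M_2(\phi)=\tilde M_2(|\phi\rangle\langle\phi|)$. $\|O\|_2$ is the Hilbert–Schmidt norm. *)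

From HB Require Import structures.
From mathcomp Require Import all_boot all_order all_algebra.
From mathcomp Require Import all_classical all_reals all_analysis.
From mathcomp Require Import complex.
Set Implicit Arguments. Unset Strict Implicit. Unset Printing Implicit Defensive.
Import Order.TTheory GRing.Theory Num.Theory.
Local Open Scope ring_scope.
Local Open Scope classical_set_scope.

Section QDefs.
Variable R : realType.
Local Notation C := (R[i]).

(* n-qubit Pauli strings P in {I,X,Y,Z}^{(x) n}: a label in 'I_4 per qubit,
   0 = I, 1 = X, 2 = Y, 3 = Z. *)
Definition pauli_label (n : nat) := {ffun 'I_n -> 'I_4}.

(* single-qubit Pauli matrix entries, computational basis |0>,|1> = false,true *)
Definition pauli1 (a : 'I_4) (b c : bool) : C :=
  match nat_of_ord a with
  | 0%N => if b == c then 1 else 0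
  | 1%N => if b == c then 0 else 1
  | 2%N => if b == c then 0 else (if b then 'i else - 'i)
  | _ => if b == c then (if b then -1 else 1) else 0
  end.

Definition qbit (k i : nat) : bool := odd (i %/ 2 ^ k).

(* The Pauli operator P = sigma_{P 0} (x) ... (x) sigma_{P (n-1)} on (C^2)^{(x) n},
   written entrywise (Kronecker product in the computational basis). *)
Definition pauli (n : nat) (P : pauli_label n) : 'M[C]_(2 ^ n) :=
  \matrix_(i, j) \prod_(k < n) pauli1 (P k) (qbit k i) (qbit k j).

Definition dagger (m p : nat) (A : 'M[C]_(m, p)) : 'M[C]_(p, m) := (map_mx conjc A)^T.

Definition herm_op (n : nat) (A : 'M[C]_(2 ^ n)) : Prop := dagger A = A.

Definition density_op (n : nat) (rho : 'M[C]_(2 ^ n)) : Prop :=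
  herm_op rho /\ (forall v : 'cV[C]_(2 ^ n), 0 <= (dagger v *m rho *m v) 0 0)
  /\ \tr rho = 1.

Definition unit_vec (n : nat) (phi : 'cV[C]_(2 ^ n)) : Prop := (dagger phi *m phi) 0 0 = 1.
Definition ketbra (n : nat) (phi : 'cV[C]_(2 ^ n)) : 'M[C]_(2 ^ n) := phi *m dagger phi.

Definition qdim (n : nat) : R := (2 ^ n)%:R.

(* the functions Xi on Pauli strings (real-valued; for Hermitian arguments
   the traces below are real, so taking the real part loses nothing) *)
Definition Xi n (A : 'M[C]_(2 ^ n)) (P : pauli_label n) : R :=
  complex.Re (\tr (A *m pauli P)).
Definition Xi2 n (A B : 'M[C]_(2 ^ n)) (P : pauli_label n) : R := Xi A P * Xi B P.
Definition tXi n (A B : 'M[C]_(2 ^ n)) (P : pauli_label n) : R :=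
  complex.Re (\tr (A *m pauli P *m B *m pauli P)).

Definition dotP n (f g : pauli_label n -> R) : R := \sum_(P : pauli_label n) f P * g P.
Definition norm2sq n (f : pauli_label n -> R) : R := \sum_(P : pauli_label n) f P ^+ 2.
Definition norm4pow4 n (f : pauli_label n -> R) : R := \sum_(P : pauli_label n) f P ^+ 4.
Definition norminf n (f : pauli_label n -> R) : R :=
  \big[Num.max/0]_(P : pauli_label n) `|f P|.
(* ||f^2||_[d]: sum of the d largest values of f(P)^2 *)
Definition topd n (f : pauli_label n -> R) : R :=
  \big[Num.max/0]_(S : {set pauli_label n} | #|S| == (2 ^ n)%N)
     \sum_(P in S) f P ^+ 2.

Definition Vtri n (O rho : 'M[C]_(2 ^ n)) : R :=
  (qdim n + 1) / (qdim n * (qdim n + 2)) *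
  (norm2sq (Xi2 rho O) + dotP (tXi rho O) (Xi2 rho O)).

Definition Vmax n (O : 'M[C]_(2 ^ n)) : R :=
  sup [set Vtri O rho | rho in [set rho | density_op rho]].

Definition purity n (rho : 'M[C]_(2 ^ n)) : R := complex.Re (\tr (rho *m rho)).

Definition qlog2 (x : R) : R := ln x / ln 2.

Definition M2t n (rho : 'M[C]_(2 ^ n)) : R :=
  - qlog2 (norm4pow4 (Xi rho) / (qdim n * purity rho)).

Definition M2 n (phi : 'cV[C]_(2 ^ n)) : R := M2t (ketbra phi).

Definition ringed n (rho : 'M[C]_(2 ^ n)) : 'M[C]_(2 ^ n) :=
  rho - (real_complex R ((qdim n)^-1))%:M.

Definition hs_norm n (O : 'M[C]_(2 ^ n)) : R := Num.sqrt (complex.Re (\tr (dagger O *m O))).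

End QDefs.

From HB Require Import structures.
From mathcomp Require Import all_boot all_order all_algebra.
From mathcomp Require Import all_classical all_reals all_analysis.
From mathcomp Require Import complex.
From mathcomp Require Import ring lra.
Set Implicit Arguments. Unset Strict Implicit. Unset Printing Implicit Defensive.
Import Order.TTheory GRing.Theory Num.Theory.
Local Open Scope ring_scope.

(* Write Xi_{rho,O}(P) = Xi_rho(P) Xi_O(P).  Since P Q P = chi(P,Q) Q with a
   +-1 matrix chi whose rows are orthogonal of length d, tXi_{rho,O} is the
   isometric image (1/d) chi Xi_{rho,O}; by Cauchy-Schwarz the second term of
   V_triangle is at most the first, so V_triangle(O,rho) is at most
   2(d+1)/(d(d+2)) sum_P Xi_rho(P)^2 Xi_O(P)^2.  Each bound estimates this sum:
   by Cauchy-Schwarz against ||Xi_rho||_4^4 = 2^(-M2~(rho)) d wp; termwise by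
   ||Xi_{rho - 1/d}||_oo^2, which agrees with Xi_rho off the identity where
   Xi_O vanishes, and Parseval sum_P Xi_O(P)^2 = d ||O||_2^2; and, the weights
   Xi_rho(P)^2 lying in [0,1] with total d wp <= d, by the d largest values of
   Xi_O(P)^2 (fractional knapsack).  For O = |phi><phi| - 1/d everything is
   explicit in G = sum_{P <> I} Xi_phi(P)^4 = d 2^(-M2(phi)) - 1. *)

Lemma prod_nat_eq_ffun (V : comNzRingType) (I : finType) (T : eqType)
    (f g : {ffun I -> T}) :
  \prod_k (((f k == g k) : nat)%:R : V) = ((f == g) : nat)%:R.
Proof.
have [->|neq_fg] := eqVneq f g; first by rewrite big1 // => k _; rewrite eqxx.
have [k neq_k] : exists k, f k != g k.
  apply/existsP; apply: contraR neq_fg => /existsPn eq_fg.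
  by apply/eqP/ffunP => k; apply/eqP; have := eq_fg k; rewrite negbK.
by rewrite (bigD1 k) //= (negbTE neq_k) mul0r.
Qed.

Lemma sum_mul_nat_eq (V : pzSemiRingType) (I : finType) (F : I -> V) (x : I) :
  \sum_i F i * ((i == x) : nat)%:R = F x.
Proof.
rewrite (bigD1 x) //= eqxx mulr1 big1 ?addr0 // => i /negbTE ->.
by rewrite mulr0.
Qed.

Section Qubits.

Lemma qbit0 i : qbit 0 i = odd i.
Proof. by rewrite /qbit expn0 divn1. Qed.

Lemma qbitS k i : qbit k.+1 i = qbit k i./2.
Proof. by rewrite /qbit expnS divnMA divn2. Qed.

Lemma eq_from_qbits n i j : (i < 2 ^ n)%N -> (j < 2 ^ n)%N ->
  (forall k, (k < n)%N -> qbit k i = qbit k j) -> i = j.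
Proof.
elim: n i j => [|n IHn] i j; first by rewrite expn0 !ltnS !leqn0 => /eqP -> /eqP ->.
move=> lt_i lt_j eq_ij.
have eq_odd : odd i = odd j by rewrite -!qbit0; apply: eq_ij.
have eq_half : i./2 = j./2.
  apply: IHn; try by rewrite -divn2 ltn_divLR // -expnSr.
  by move=> k lt_k; rewrite -!qbitS; apply: eq_ij.
by rewrite -(odd_double_half i) -(odd_double_half j) eq_odd eq_half.
Qed.

Variable n : nat.

Definition bits (i : 'I_(2 ^ n)) : {ffun 'I_n -> bool} := [ffun k : 'I_n => qbit k i].

Lemma bits_inj : injective bits.
Proof.
move=> i j /ffunP eq_ij; apply/val_inj/(@eq_from_qbits n); try exact: ltn_ord.
by move=> k lt_k; have := eq_ij (Ordinal lt_k); rewrite !ffunE.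
Qed.

Lemma bits_bij : bijective bits.
Proof.
by apply: inj_card_bij; [exact: bits_inj | rewrite card_ffun card_bool !card_ord].
Qed.

Lemma sum_prod_qbits (V : comNzRingType) (g : 'I_n -> bool -> V) :
  \sum_(i : 'I_(2 ^ n)) \prod_(k < n) g k (qbit k i)
  = \prod_(k < n) \sum_(b : bool) g k b.
Proof.
rewrite bigA_distr_bigA /= [RHS](reindex bits) /=; last exact: onW_bij bits_bij.
by apply: eq_bigr => i _; apply: eq_bigr => k _; rewrite ffunE.
Qed.

Lemma sum2_prod_qbits (V : comNzRingType) (g : 'I_n -> bool -> bool -> V) :
  \sum_(i : 'I_(2 ^ n)) \sum_(j : 'I_(2 ^ n)) \prod_(k < n) g k (qbit k i) (qbit k j)
  = \prod_(k < n) \sum_(b : bool) \sum_(c : bool) g k b c.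
Proof.
rewrite -(sum_prod_qbits (fun k b => \sum_(c : bool) g k b c)).
by apply: eq_bigr => i _; exact: sum_prod_qbits.
Qed.

Lemma prod_nat_eq_qbits (V : comNzRingType) (i j : 'I_(2 ^ n)) :
  \prod_(k < n) (((qbit k i == qbit k j) : nat)%:R : V) = ((i == j) : nat)%:R.
Proof.
rewrite -(inj_eq bits_inj) -prod_nat_eq_ffun.
by apply: eq_bigr => k _; rewrite !ffunE.
Qed.

End Qubits.

Section SingleQubit.
Variable R : realType.
Local Notation p1 := (pauli1 R).

(* Two Pauli matrices commute when one of them is I or they are equal, and
   anticommute otherwise. *)
Definition chi1 (a b : 'I_4) : R :=
  if (a == 0%N :> nat) || (b == 0%N :> nat) || (a == b) then 1 else -1.

Lemma mulcii : 'i * 'i = -1 :> R[i].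
Proof. by rewrite -expr2 sqr_i. Qed.

Lemma pauli1_I b c : p1 ord0 b c = ((b == c) : nat)%:R.
Proof. by rewrite /pauli1 /=; case: (b == c). Qed.

Lemma pauli1_adj (a : 'I_4) b c : conjc (p1 a b c) = p1 a c b.
Proof.
case: a => [[|[|[|[|a]]]] lt_a] //; rewrite /pauli1 /=; case: b; case: c => //=;
  by apply/eqP; rewrite eq_complex /= ?oppr0 ?opprK ?eqxx.
Qed.

Lemma pauli1_tr (a : 'I_4) : \sum_(b : bool) p1 a b b = 2 * ((a == ord0) : nat)%:R.
Proof. by case: a => [[|[|[|[|a]]]] lt_a] //; rewrite /pauli1 !big_bool /=; ring. Qed.

Lemma pauli1_completeness b c e f :
  \sum_(a < 4) p1 a b c * p1 a e f = 2 * (((b == f) : nat)%:R * ((c == e) : nat)%:R).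
Proof.
rewrite !big_ord_recl big_ord0 /pauli1 /=; case: b; case: c; case: e; case: f => /=;
  rewrite ?(mulr0, mul0r, mulr1, mul1r, addr0, add0r, mulrN, mulNr, opprK, mulcii);
  ring.
Qed.

Lemma pauli1_conj (a b : 'I_4) x y :
  \sum_(u : bool) \sum_(v : bool) p1 a x u * p1 b u v * p1 a v y
  = real_complex R (chi1 a b) * p1 b x y.
Proof.
case: a => [[|[|[|[|a]]]] lt_a] //; case: b => [[|[|[|[|b]]]] lt_b] //;
  rewrite /chi1 /pauli1 /= !big_bool /=; case: x; case: y => /=;
  rewrite ?(mulr0, mul0r, mulr1, mul1r, addr0, add0r, mulrN, mulNr, opprK, mulcii,
            mulrNN);
  ring.
Qed.

Lemma chi1_orth (b c : 'I_4) : \sum_(a < 4) chi1 a b * chi1 a c = 4 * ((b == c) : nat)%:R.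
Proof.
case: b => [[|[|[|[|b]]]] lt_b] //; case: c => [[|[|[|[|c]]]] lt_c] //;
  rewrite !big_ord_recl big_ord0 /chi1 /=; ring.
Qed.

End SingleQubit.

Section Adjoint.
Variable R : realType.
Local Notation C := R[i].

Lemma daggerM m p q (A : 'M[C]_(m, p)) (B : 'M[C]_(p, q)) :
  dagger (A *m B) = dagger B *m dagger A.
Proof. by rewrite /dagger map_mxM trmx_mul. Qed.

Lemma daggerK m p (A : 'M[C]_(m, p)) : dagger (dagger A) = A.
Proof. by apply/matrixP => i j; rewrite /dagger !mxE conjcK. Qed.

Lemma daggerD m p (A B : 'M[C]_(m, p)) : dagger (A + B) = dagger A + dagger B.
Proof. by apply/matrixP => i j; rewrite /dagger !mxE rmorphD. Qed.

Lemma daggerN m p (A : 'M[C]_(m, p)) : dagger (- A) = - dagger A.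
Proof. by apply/matrixP => i j; rewrite /dagger !mxE rmorphN. Qed.

Lemma daggerZ m p (a : C) (A : 'M[C]_(m, p)) : dagger (a *: A) = conjc a *: dagger A.
Proof. by apply/matrixP => i j; rewrite /dagger !mxE rmorphM. Qed.

Lemma dagger1 m : dagger (1%:M : 'M[C]_m) = 1%:M.
Proof. by rewrite /dagger map_mx1 trmx1. Qed.

Lemma mxtrace_dagger m (A : 'M[C]_m) : \tr (dagger A) = conjc (\tr A).
Proof.
rewrite /dagger mxtrace_tr /mxtrace rmorph_sum.
by apply: eq_bigr => i _; rewrite mxE.
Qed.

Lemma herm_entry m (A : 'M[C]_m) i j : dagger A = A -> A j i = conjc (A i j).
Proof. by move=> hA; rewrite -{1}hA /dagger !mxE. Qed.

Lemma conjc_id_real (z : C) : conjc z = z -> z = real_complex R (complex.Re z).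
Proof.
case: z => a b /= [] eq_b; congr Complex.
have : b + b = 0 by rewrite -{1}eq_b addNr.
lra.
Qed.

Lemma conjc_ge0 (z : C) : 0 <= z -> conjc z = z.
Proof. by case: z => x y; rewrite lecE /= => /andP[/eqP -> _]; rewrite oppr0. Qed.

Lemma ReD (z w : C) : complex.Re (z + w) = complex.Re z + complex.Re w.
Proof. by case: z; case: w. Qed.

Lemma ReN (z : C) : complex.Re (- z) = - complex.Re z.
Proof. by case: z. Qed.

Lemma Re_realM (a : R) (z : C) :
  complex.Re (real_complex R a * z) = a * complex.Re z.
Proof. by case: z => x y /=; rewrite mul0r subr0. Qed.

Lemma Re_ge0 (z : C) : 0 <= z -> 0 <= complex.Re z.
Proof. by rewrite lecE => /andP[]. Qed.

End Adjoint.

Section PauliStrings.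
Variables (R : realType) (n : nat).
Local Notation C := R[i].
Local Notation p1 := (pauli1 R).
Local Notation P_ := (@pauli R n).
Local Notation N := (2 ^ n)%N.

Definition Ilab : pauli_label n := [ffun => ord0].

Lemma pauliE (P : pauli_label n) i j :
  P_ P i j = \prod_(k < n) p1 (P k) (qbit k i) (qbit k j).
Proof. by rewrite mxE. Qed.

Lemma pauli_Ilab : P_ Ilab = 1%:M.
Proof.
apply/matrixP => i j; rewrite pauliE mxE.
under eq_bigr => k _ do rewrite ffunE pauli1_I.
by rewrite prod_nat_eq_qbits.
Qed.

Lemma pauli_adj (P : pauli_label n) : dagger (P_ P) = P_ P.
Proof.
apply/matrixP => i j; rewrite /dagger !mxE rmorph_prod.
by apply: eq_bigr => k _; exact: pauli1_adj.
Qed.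

Lemma pauli_completeness i j k l :
  \sum_(P : pauli_label n) P_ P i j * P_ P k l
  = (N%:R : C) * (((i == l) : nat)%:R * ((j == k) : nat)%:R).
Proof.
under eq_bigr => P _ do rewrite !pauliE -big_split /=.
rewrite -(bigA_distr_bigA (fun (m : 'I_n) a =>
  p1 a (qbit m i) (qbit m j) * p1 a (qbit m k) (qbit m l))) /=.
under eq_bigr => m _ do rewrite pauli1_completeness.
by rewrite !big_split /= prodr_const card_ord natrX !prod_nat_eq_qbits.
Qed.

Lemma mxtrace_pauli (P : pauli_label n) :
  \tr (P_ P) = (N%:R : C) * ((P == Ilab) : nat)%:R.
Proof.
rewrite /mxtrace; under eq_bigr => i _ do rewrite pauliE.
rewrite (sum_prod_qbits (fun k b => p1 (P k) b b)).
under eq_bigr => k _ do rewrite pauli1_tr.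
rewrite big_split /= prodr_const card_ord natrX -prod_nat_eq_ffun.
by congr (_ * _); apply: eq_bigr => k _; rewrite ffunE.
Qed.

Definition chi (P Q : pauli_label n) : R := \prod_(k < n) chi1 R (P k) (Q k).

Lemma pauli_conj (P Q : pauli_label n) :
  P_ P *m P_ Q *m P_ P = real_complex R (chi P Q) *: P_ Q.
Proof.
apply/matrixP => x y; rewrite !mxE.
under eq_bigr => v _ do rewrite mxE big_distrl /=.
rewrite exchange_big /=.
under eq_bigr => u _ do under eq_bigr => v _ do rewrite !pauliE -!big_split /=.
rewrite (sum2_prod_qbits (fun k b c =>
  p1 (P k) (qbit k x) b * p1 (Q k) b c * p1 (P k) c (qbit k y))).
rewrite (eq_bigr (fun k => real_complex R (chi1 R (P k) (Q k))
                            * p1 (Q k) (qbit k x) (qbit k y))); last first.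
  by move=> k _; exact: pauli1_conj.
by rewrite big_split /= rmorph_prod.
Qed.

Lemma chi_Ilab (P : pauli_label n) : chi P Ilab = 1.
Proof. by rewrite /chi big1 // => k _; rewrite ffunE /chi1 /= orbT. Qed.

Lemma pauli_sqr (P : pauli_label n) : P_ P *m P_ P = 1%:M.
Proof.
have := pauli_conj P Ilab; rewrite pauli_Ilab mulmx1 chi_Ilab => ->.
by rewrite rmorph1 scale1r.
Qed.

Lemma chi_orth (Q S : pauli_label n) :
  \sum_(P : pauli_label n) chi P Q * chi P S = (4 ^ n)%:R * ((Q == S) : nat)%:R.
Proof.
under eq_bigr => P _ do rewrite /chi -big_split /=.
rewrite -(bigA_distr_bigA (fun (m : 'I_n) a => chi1 R a (Q m) * chi1 R a (S m))) /=.
under eq_bigr => m _ do rewrite chi1_orth.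
by rewrite big_split /= prodr_const card_ord natrX prod_nat_eq_ffun.
Qed.

Definition pcoef (A : 'M[C]_N) (P : pauli_label n) : C := \tr (A *m P_ P).

Lemma pauli_expansion (A : 'M[C]_N) : \sum_Q pcoef A Q *: P_ Q = (N%:R : C) *: A.
Proof.
apply/matrixP => x y; rewrite summxE mxE.
under eq_bigr => Q _ do rewrite mxE /pcoef /mxtrace big_distrl /=.
under eq_bigr => Q _ do under eq_bigr => i _ do rewrite mxE big_distrl /=.
rewrite exchange_big /=; under eq_bigr => i _ do rewrite exchange_big /=.
under eq_bigr => i _ do under eq_bigr => j _ do
  (rewrite (eq_bigr (fun Q => A i j * (P_ Q j i * P_ Q x y)));
   last by move=> Q _; rewrite mulrA).
have reorder (a b c e : C) : a * (b * (c * e)) = b * a * e * c by ring.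
under eq_bigr => i _ do under eq_bigr => j _ do
  rewrite -mulr_sumr pauli_completeness reorder.
by under eq_bigr => i _ do rewrite sum_mul_nat_eq; rewrite sum_mul_nat_eq.
Qed.

Lemma sum_pcoefM (A B : 'M[C]_N) :
  \sum_Q pcoef A Q * pcoef B Q = (N%:R : C) * \tr (A *m B).
Proof.
rewrite -mxtraceZ scalemxAl -pauli_expansion mulmx_suml raddf_sum /=.
apply: eq_bigr => Q _; rewrite -scalemxAl mxtraceZ /pcoef.
by rewrite [\tr (P_ Q *m B)]mxtrace_mulC.
Qed.

Lemma mxtrace_conj_pauli (A B : 'M[C]_N) P :
  \tr (A *m P_ P *m B *m P_ P) =
  (N%:R : C)^-1 * \sum_Q pcoef B Q * real_complex R (chi P Q) * pcoef A Q.
Proof.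
have N_neq0 : (N%:R : C) != 0 by rewrite pnatr_eq0 expn_eq0.
rewrite -!mulmxA -[B in P_ P *m (B *m _)](scalerK N_neq0) -pauli_expansion.
rewrite -scalemxAl -scalemxAr -scalemxAr mxtraceZ; congr (_ * _).
rewrite mulmx_suml !mulmx_sumr raddf_sum /=; apply: eq_bigr => Q _.
by rewrite -scalemxAl -scalemxAr mulmxA pauli_conj -!scalemxAr !mxtraceZ mulrA.
Qed.

End PauliStrings.

Section PauliCoefficients.
Variables (R : realType) (n : nat).
Local Notation C := R[i].
Local Notation P_ := (@pauli R n).
Local Notation N := (2 ^ n)%N.

Lemma pcoef_real (A : 'M[C]_N) P : herm_op A -> pcoef A P = real_complex R (Xi A P).
Proof.
move=> hA; apply: conjc_id_real.
by rewrite /pcoef -mxtrace_dagger daggerM pauli_adj hA mxtrace_mulC.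
Qed.

Lemma sum_XiM (A B : 'M[C]_N) : herm_op A -> herm_op B ->
  \sum_P Xi A P * Xi B P = N%:R * complex.Re (\tr (A *m B)).
Proof.
move=> hA hB; have := sum_pcoefM A B.
under eq_bigr => P _ do rewrite (pcoef_real P hA) (pcoef_real P hB) -rmorphM.
rewrite -rmorph_sum -(rmorph_nat (real_complex R)) => /(congr1 (@complex.Re R)).
by rewrite Re_realM.
Qed.

Lemma sum_Xi_sqr (A : 'M[C]_N) : herm_op A ->
  \sum_P Xi A P ^+ 2 = N%:R * complex.Re (\tr (A *m A)).
Proof. by move=> hA; rewrite -sum_XiM //; apply: eq_bigr => P _; rewrite expr2. Qed.

Lemma Xi_Ilab (A : 'M[C]_N) : Xi A (Ilab n) = complex.Re (\tr A).
Proof. by rewrite /Xi pauli_Ilab mulmx1. Qed.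

Lemma Xi_ringed (A : 'M[C]_N) P :
  Xi (ringed A) P = Xi A P - ((P == Ilab n) : nat)%:R.
Proof.
rewrite /Xi /ringed mulmxBl raddfB /= mul_scalar_mx mxtraceZ mxtrace_pauli.
rewrite -natrM -(rmorph_nat (real_complex R)) -rmorphM ReD ReN /=.
by rewrite natrM mulrA /qdim mulVf ?mul1r // pnatr_eq0 expn_eq0.
Qed.

Lemma ringed_herm (A : 'M[C]_N) : herm_op A -> herm_op (ringed A).
Proof.
move=> herm_A; rewrite /herm_op /ringed daggerD daggerN herm_A.
by rewrite /dagger map_scalar_mx tr_scalar_mx; congr (_ - _%:M); exact: conjc_real.
Qed.

Lemma tXi_chi (A B : 'M[C]_N) P : herm_op A -> herm_op B ->
  tXi A B P = (N%:R : R)^-1 * \sum_Q chi R P Q * Xi2 A B Q.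
Proof.
move=> hA hB; rewrite /tXi mxtrace_conj_pauli.
under eq_bigr => Q _ do rewrite (pcoef_real Q hA) (pcoef_real Q hB) -!rmorphM.
rewrite -rmorph_sum -(rmorph_nat (real_complex R)) -rmorphV ?unitfE ?pnatr_eq0 ?expn_eq0 //.
rewrite -rmorphM /=; congr (_ * _); apply: eq_bigr => Q _; rewrite /Xi2; ring.
Qed.

End PauliCoefficients.

Section DensityOperators.
Variables (R : realType) (n : nat).
Local Notation C := R[i].
Local Notation P_ := (@pauli R n).
Local Notation N := (2 ^ n)%N.

Lemma psd_mxtrace (rho M : 'M[C]_N) :
  (forall v : 'cV[C]_N, 0 <= (dagger v *m rho *m v) 0 0) ->
  0 <= \tr (dagger M *m rho *m M).
Proof.
move=> psd_rho; apply: sumr_ge0 => i _.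
have -> : (dagger M *m rho *m M) i i = (dagger (col i M) *m rho *m col i M) 0 0.
  rewrite !mxE; apply: eq_bigr => j _; rewrite !mxE; congr (_ * _).
  by apply: eq_bigr => k _; rewrite /dagger !mxE.
exact: psd_rho.
Qed.

(* 1 + P and 1 - P are twice the projections onto the eigenspaces of P. *)
Lemma Xi_density_bound (rho : 'M[C]_N) P : density_op rho -> -1 <= Xi rho P <= 1.
Proof.
move=> [_ [psd_rho tr_rho]].
have tr_proj (M : 'M[C]_N) : dagger M = M -> M *m M = M + M ->
    0 <= complex.Re (\tr (rho *m M)).
  move=> herm_M sqr_M; have := psd_mxtrace M psd_rho.
  rewrite herm_M mxtrace_mulC mulmxA sqr_M mulmxDl mxtraceD => /Re_ge0.
  by rewrite ReD mxtrace_mulC; lra.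
have ge0_plus : 0 <= complex.Re (\tr (rho *m (1%:M + P_ P))).
  apply: tr_proj; first by rewrite daggerD dagger1 pauli_adj.
  by rewrite mulmxDl !mulmxDr !mul1mx !mulmx1 pauli_sqr [P_ P + 1%:M]addrC.
have ge0_minus : 0 <= complex.Re (\tr (rho *m (1%:M - P_ P))).
  apply: tr_proj; first by rewrite daggerD dagger1 daggerN pauli_adj.
  by rewrite mulmxBl !mulmxBr !mul1mx !mulmx1 pauli_sqr opprB.
rewrite mulmxDr mulmxBr mulmx1 mxtraceD raddfB /= ?ReD ?ReN tr_rho /= in ge0_plus ge0_minus.
by rewrite /Xi; apply/andP; split; lra.
Qed.

Lemma quad_form2 (rho : 'M[C]_N) i j (x y : C) :
  let v := x *: delta_mx i 0 + y *: delta_mx j 0 : 'cV[C]_N in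
  (dagger v *m rho *m v) 0 0 = conjc x * x * rho i i + conjc x * y * rho i j
     + conjc y * x * rho j i + conjc y * y * rho j j.
Proof.
have dagger_delta k : dagger (delta_mx k 0 : 'cV[C]_N) = delta_mx 0 k.
  by rewrite /dagger map_delta_mx trmx_delta.
have entry k l : (delta_mx 0 k : 'rV[C]_N) *m rho *m (delta_mx l 0 : 'cV[C]_N)
                 = (rho k l)%:M.
  apply/matrixP => a c; rewrite !ord1 [RHS]mxE eqxx mulr1n.
  by rewrite -rowE -colE !mxE.
rewrite /= daggerD !daggerZ !dagger_delta !mulmxDl !mulmxDr.
by rewrite -!scalemxAl -!scalemxAr !entry !mxE eqxx !mulr1n; ring.
Qed.

Lemma density_minor2 (rho : 'M[C]_N) i j : density_op rho ->
  rho i j * rho j i <= rho i i * rho j j.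
Proof.
move=> [herm_rho [psd_rho _]].
have conj_ji : rho j i = conjc (rho i j) by exact: herm_entry.
have Q x y : 0 <= conjc x * x * rho i i + conjc x * y * rho i j
                  + conjc y * x * conjc (rho i j) + conjc y * y * rho j j.
  by have := psd_rho (x *: delta_mx i 0 + y *: delta_mx j 0); rewrite quad_form2 conj_ji.
rewrite conj_ji; move: Q; set z := rho i j; set a := rho i i; set b := rho j j => Q.
have a_ge0 : 0 <= a.
  by have := Q 1 0; rewrite rmorph1 rmorph0 !(mul0r, mulr0, addr0, mul1r).
have b_ge0 : 0 <= b.
  by have := Q 0 1; rewrite rmorph1 rmorph0 !(mul0r, mulr0, add0r, addr0, mul1r).
have [a0|a_neq0] := eqVneq a 0; last first.
  have a_gt0 : 0 < a by rewrite lt_def a_neq0.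
  rewrite -subr_ge0 -(pmulr_rge0 _ a_gt0).
  have := Q (- z) a; rewrite raddfN (conjc_ge0 a_ge0).
  by move/le_trans; apply; rewrite le_eqVlt; apply/orP; left; apply/eqP; ring.
have [b0|b_neq0] := eqVneq b 0; last first.
  have b_gt0 : 0 < b by rewrite lt_def b_neq0.
  rewrite -subr_ge0 -(pmulr_rge0 _ b_gt0).
  have := Q b (- conjc z); rewrite raddfN /= conjcK (conjc_ge0 b_ge0).
  by move/le_trans; apply; rewrite le_eqVlt; apply/orP; left; apply/eqP; ring.
have := Q 1 (- conjc z); rewrite rmorph1 raddfN /= conjcK a0 b0.
rewrite !(mulr0, mul1r, mulr1, add0r, addr0) !mulNr [conjc z * z]mulrC -opprD oppr_ge0.
by apply: le_trans; rewrite lerDl mulcJ_ge0.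
Qed.

Lemma purity_le1 (rho : 'M[C]_N) : density_op rho -> purity rho <= 1.
Proof.
move=> dens_rho; have : \tr (rho *m rho) <= \tr rho * \tr rho.
  rewrite /mxtrace mulr_suml; apply: ler_sum => i _.
  rewrite mxE mulr_sumr; apply: ler_sum => j _; exact: density_minor2.
by rewrite dens_rho.2.2 mulr1 lecE => /andP[].
Qed.

Lemma Xi_density_Ilab (rho : 'M[C]_N) : density_op rho -> Xi rho (Ilab n) = 1.
Proof. by move=> [_ [_ tr_rho]]; rewrite Xi_Ilab tr_rho. Qed.

End DensityOperators.

Section PureStates.
Variables (R : realType) (n : nat).
Local Notation C := R[i].
Local Notation P_ := (@pauli R n).
Local Notation N := (2 ^ n)%N.
Variable phi : 'cV[C]_N.
Hypothesis unit_phi : unit_vec phi.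
Local Notation rho := (ketbra phi).

Lemma dagger_mulmx_unit : dagger phi *m phi = 1%:M.
Proof. by rewrite [LHS]mx11_scalar unit_phi. Qed.

Lemma ketbra_herm : herm_op rho.
Proof. by rewrite /herm_op /ketbra daggerM daggerK. Qed.

Lemma mxtrace_ketbra : \tr rho = 1.
Proof. by rewrite /ketbra mxtrace_mulC dagger_mulmx_unit mxtrace1. Qed.

Lemma ketbra_idem : rho *m rho = rho.
Proof. by rewrite /ketbra mulmxA -[phi *m _ *m phi]mulmxA dagger_mulmx_unit mulmx1. Qed.

Lemma ketbra_density : density_op rho.
Proof.
split; first exact: ketbra_herm.
split; last exact: mxtrace_ketbra.
move=> v; rewrite /ketbra !mulmxA -(mulmxA (dagger v *m phi)).
have -> : dagger phi *m v = dagger (dagger v *m phi) by rewrite daggerM daggerK.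
by rewrite mxE big_ord1 /dagger !mxE; exact: mulcJ_ge0.
Qed.

Lemma purity_ketbra : purity rho = 1.
Proof. by rewrite /purity ketbra_idem mxtrace_ketbra. Qed.

Lemma mxtrace_ketbra_conj P : \tr (rho *m P_ P *m rho *m P_ P) = pcoef rho P ^+ 2.
Proof.
rewrite /ketbra (_ : _ *m _ = phi *m (dagger phi *m P_ P *m phi) *m (dagger phi *m P_ P));
  last by rewrite !mulmxA.
rewrite [dagger phi *m P_ P *m phi]mx11_scalar mul_mx_scalar -scalemxAl mxtraceZ.
rewrite /pcoef mulmxA expr2; congr (_ * _).
by rewrite -[in RHS]mulmxA [in RHS]mxtrace_mulC /mxtrace big_ord1.
Qed.

Lemma tXi_ketbra_ringed P : tXi rho (ringed rho) P = Xi rho P ^+ 2 - (qdim R n)^-1.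
Proof.
rewrite /tXi /ringed mulmxBr scalar_mxC mul_scalar_mx mulmxBl -scalemxAl.
rewrite -[rho *m P_ P *m P_ P]mulmxA pauli_sqr mulmx1 raddfB /= mxtraceZ.
rewrite mxtrace_ketbra mulr1 mxtrace_ketbra_conj (pcoef_real P ketbra_herm).
by rewrite -rmorphXn -rmorphB.
Qed.

End PureStates.

Section FiniteSums.
Variable R : realFieldType.

Lemma cauchy_schwarz (T : finType) (a b : T -> R) :
  (\sum_i a i * b i) ^+ 2 <= (\sum_i a i ^+ 2) * (\sum_i b i ^+ 2).
Proof.
have sum_sqr_ge0 : 0 <= \sum_i \sum_j (a i * b j - a j * b i) ^+ 2.
  by apply: sumr_ge0 => i _; apply: sumr_ge0 => j _; exact: sqr_ge0.
have sum2M (f g : T -> R) : \sum_i \sum_j f i * g j = (\sum_i f i) * (\sum_j g j).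
  by rewrite mulr_suml; apply: eq_bigr => i _; rewrite mulr_sumr.
have lagrange : \sum_i \sum_j (a i * b j - a j * b i) ^+ 2 =
    \sum_i \sum_j a i ^+ 2 * b j ^+ 2 + \sum_i \sum_j b i ^+ 2 * a j ^+ 2
    - 2 * \sum_i \sum_j (a i * b i) * (a j * b j).
  rewrite mulr_sumr -!big_split -sumrB /=; apply: eq_bigr => i _.
  rewrite mulr_sumr -!big_split -sumrB /=; apply: eq_bigr => j _; ring.
by rewrite lagrange !sum2M -expr2 in sum_sqr_ge0; lra.
Qed.

Lemma sum_sqr_le_card (T : finType) (S : {set T}) (g : T -> R) :
  (\sum_(P in S) g P) ^+ 2 <= #|S|%:R * \sum_P g P ^+ 2.
Proof.
pose indS P : R := if P \in S then 1 else 0.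
have := cauchy_schwarz indS (fun P => indS P * g P).
have -> : \sum_P indS P * (indS P * g P) = \sum_(P in S) g P.
  rewrite [RHS]big_mkcond; apply: eq_bigr => P _.
  by rewrite /indS; case: (P \in S); rewrite ?mul1r ?mul0r.
have -> : \sum_P indS P ^+ 2 = #|S|%:R.
  rewrite (eq_bigr indS); last by move=> P _; rewrite /indS; case: (P \in S);
    rewrite ?expr1n ?expr0n.
  by rewrite -big_mkcond /= sumr_const.
move/le_trans; apply; rewrite ler_wpM2l // ler_sum // => P _.
by rewrite /indS; case: (P \in S); rewrite ?mul1r ?mul0r ?expr0n ?sqr_ge0.
Qed.

Lemma sum_in_le_sum (T : finType) (S : {set T}) (g : T -> R) :
  (forall P, 0 <= g P) -> \sum_(P in S) g P <= \sum_P g P.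
Proof.
move=> g_ge0; rewrite big_mkcond /=; apply: ler_sum => P _.
by case: (P \in S).
Qed.

End FiniteSums.

Section Knapsack.
Variables (R : realFieldType) (T : finType).

Lemma exists_top_subset (f : T -> R) m : (m <= #|T|)%N ->
  exists2 S : {set T}, #|S| = m & forall a b, a \in S -> b \notin S -> f b <= f a.
Proof.
move=> le_mT; pose r a b := f b <= f a.
have r_trans : transitive r by move=> b a c; rewrite /r => h1 h2; exact: le_trans h2 h1.
have r_total : total r by move=> a b; rewrite /r le_total.
pose s := sort r (enum T).
have s_uniq : uniq s by rewrite sort_uniq enum_uniq.
exists [set x in take m s].
  rewrite cardsE; move/card_uniqP: (take_uniq m s_uniq) => ->.
  by rewrite size_takel // size_sort -cardT.
move=> a b; rewrite !inE => a_top b_top.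
have : pairwise r s by rewrite -sorted_pairwise // sort_sorted.
rewrite -(cat_take_drop m s) pairwise_cat => /and3P[/allrelP r_td _ _].
apply: r_td => //.
have : b \in take m s ++ drop m s by rewrite cat_take_drop mem_sort mem_enum.
by rewrite mem_cat (negbTE b_top).
Qed.

(* The greedy solution of the fractional knapsack problem is optimal. *)
Lemma weighted_sum_le_top (f y : T -> R) (S : {set T}) : (0 < #|S|)%N ->
  (forall a b, a \in S -> b \notin S -> f b <= f a) ->
  (forall P, 0 <= f P) -> (forall P, 0 <= y P <= 1) -> \sum_P y P <= #|S|%:R ->
  \sum_P y P * f P <= \sum_(P in S) f P.
Proof.
move=> /card_gt0P[a1 a1S] top_S f_ge0 y_01 sum_y.
have [a0 a0S min_a0] := arg_minP f a1S; set t := f a0.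
have t_ge0 : 0 <= t by apply: f_ge0.
rewrite (bigID (mem S)) /=; rewrite (bigID (mem S)) /= in sum_y.
set A := \sum_(P | P \in S) y P in sum_y *.
set B := \sum_(P | P \notin S) y P in sum_y *.
have out_S : \sum_(P | P \notin S) y P * f P <= t * B.
  rewrite /B mulr_sumr; apply: ler_sum => P P_S.
  have := y_01 P; have := top_S a0 P a0S P_S; rewrite -/t => le_t /andP[y_ge0 y_le1].
  nra.
have in_S : \sum_(P | P \in S) y P * f P + t * (#|S|%:R - A) <= \sum_(P in S) f P.
  rewrite -[#|S|%:R]sumr_const /A -sumrB mulr_sumr -big_split /=.
  apply: ler_sum => P PS.
  have := y_01 P; have := min_a0 P PS; rewrite -/t => t_le /andP[y_ge0 y_le1].
  nra.
have slack : 0 <= t * (#|S|%:R - A - B) by apply: mulr_ge0 => //; lra.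
lra.
Qed.

Lemma weighted_sum_le_bigmax (f y : T -> R) m : (0 < m)%N -> (m <= #|T|)%N ->
  (forall P, 0 <= f P) -> (forall P, 0 <= y P <= 1) -> \sum_P y P <= m%:R ->
  \sum_P y P * f P <= \big[Num.max/0]_(S : {set T} | #|S| == m) \sum_(P in S) f P.
Proof.
move=> m_gt0 le_mT f_ge0 y_01 sum_y.
have [S card_S top_S] := exists_top_subset f le_mT.
have S_le_max : \sum_(P in S) f P
    <= \big[Num.max/0]_(S' : {set T} | #|S'| == m) \sum_(P in S') f P.
  by apply: le_bigmax_cond; rewrite card_S.
by apply: le_trans S_le_max; apply: weighted_sum_le_top; rewrite ?card_S.
Qed.

End Knapsack.

Lemma ler_sqrt_sqr (R : rcfType) (x y : R) : 0 <= y -> x ^+ 2 <= y -> x <= Num.sqrt y.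
Proof. by move=> y_ge0 le_xy; rewrite (le_trans (ler_norm x)) // -sqrtr_sqr ler_sqrt. Qed.

Section PowersOfTwo.
Variable R : realType.

Lemma ln2_gt0 : 0 < ln (2 : R).
Proof. by apply: ln_gt0; rewrite ltr1n. Qed.

Lemma powR2E (x : R) : 2 `^ x = expR (x * ln 2).
Proof. by rewrite /powR pnatr_eq0. Qed.

Lemma qlog2K (s : R) : 0 < s -> qlog2 s * ln 2 = ln s.
Proof. by move=> s_gt0; rewrite /qlog2 -mulrA mulVf ?mulr1 // gt_eqF // ln2_gt0. Qed.

Lemma powR2_qlog2 (s : R) : 0 < s -> 2 `^ (qlog2 s) = s.
Proof. by move=> s_gt0; rewrite powR2E qlog2K // lnK ?posrE. Qed.

Lemma powR2_1Dqlog2 (s : R) : 0 < s -> 2 `^ (1 + qlog2 s) = 2 * s.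
Proof. by move=> s_gt0; rewrite powR2E mulrDl mul1r expRD qlog2K // !lnK ?posrE. Qed.

Lemma powR2_1Dhalf_qlog2 (s : R) : 0 < s -> 2 `^ (1 + qlog2 s / 2) = 2 * Num.sqrt s.
Proof.
move=> s_gt0; rewrite powR2E mulrDl mul1r expRD lnK ?posrE //; congr (_ * _).
rewrite mulrAC qlog2K //.
have expR_half_sqr : expR (ln s / 2) ^+ 2 = s.
  by rewrite expr2 -expRD -splitr lnK ?posrE.
by rewrite -{2}expR_half_sqr sqrtr_sqr ger0_norm // expR_ge0.
Qed.

End PowersOfTwo.

Section VarianceBounds.
Variables (R : realType) (n : nat).
Local Notation C := R[i].
Local Notation N := (2 ^ n)%N.
Local Notation d := (qdim R n).

Lemma qdim_gt0 : 0 < d.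
Proof. by rewrite ltr0n expn_gt0. Qed.

Lemma qdim_ge2 : (1 <= n)%N -> 2 <= d.
Proof. by move=> n_gt0; rewrite ler_nat -{1}(expn1 2) leq_exp2l. Qed.

Lemma qdim_neq0 : d != 0.
Proof. exact: lt0r_neq0 qdim_gt0. Qed.

Lemma qdimD2_neq0 : d + 2 != 0.
Proof. by rewrite lt0r_neq0 // addr_gt0 // qdim_gt0. Qed.

Lemma vcoef_ge0 : 0 <= (d + 1) / (d * (d + 2)).
Proof. by have := qdim_gt0 => d_gt0; apply: divr_ge0; [lra | apply: mulr_ge0; lra]. Qed.

Lemma sum_Ilab (F : pauli_label n -> R) :
  \sum_P F P = F (Ilab n) + \sum_(P | P != Ilab n) F P.
Proof. exact: bigD1. Qed.

Lemma norm4pow4E (f : pauli_label n -> R) : norm4pow4 f = norm2sq (fun P => f P ^+ 2).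
Proof. by apply: eq_bigr => P _; rewrite -exprM. Qed.

Lemma norm2sq_Xi2 (rho O : 'M[C]_N) :
  norm2sq (Xi2 rho O) = \sum_P Xi rho P ^+ 2 * Xi O P ^+ 2.
Proof. by apply: eq_bigr => P _; rewrite /Xi2 exprMn. Qed.

Lemma norm2sq_tXi (rho O : 'M[C]_N) : herm_op rho -> herm_op O ->
  norm2sq (tXi rho O) = norm2sq (Xi2 rho O).
Proof.
move=> herm_rho herm_O.
set w := Xi2 rho O; rewrite /norm2sq.
under eq_bigr => P _ do
  rewrite tXi_chi // exprMn [(\sum_(Q : pauli_label n) _) ^+ 2]expr2 big_distrlr /=.
rewrite -mulr_sumr exchange_big /=; under eq_bigr => Q _ do rewrite exchange_big /=.
under eq_bigr => Q _ do under eq_bigr => S _ do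
  (rewrite (eq_bigr (fun P => w Q * w S * (chi R P Q * chi R P S)));
   last by move=> P _; rewrite /w; ring).
under eq_bigr => Q _ do under eq_bigr => S _ do rewrite -mulr_sumr chi_orth eq_sym mulrA.
under eq_bigr => Q _ do rewrite sum_mul_nat_eq.
rewrite mulr_sumr; apply: eq_bigr => Q _.
rewrite (_ : (4 ^ n)%N = N ^ 2)%N; last by rewrite -expnM mulnC expnM.
by rewrite exprVn [(N ^ 2)%:R]natrX mulrCA mulVf ?mulr1 ?expr2.
Qed.

Lemma dotP_tXi_le (rho O : 'M[C]_N) : herm_op rho -> herm_op O ->
  dotP (tXi rho O) (Xi2 rho O) <= norm2sq (Xi2 rho O).
Proof.
move=> herm_rho herm_O.
have W_ge0 : 0 <= norm2sq (Xi2 rho O) by apply: sumr_ge0 => P _; exact: sqr_ge0.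
rewrite -(ger0_norm W_ge0) -sqrtr_sqr; apply: ler_sqrt_sqr; first exact: sqr_ge0.
by rewrite [in X in _ <= X]expr2 -{1}(norm2sq_tXi herm_rho herm_O); exact: cauchy_schwarz.
Qed.

Lemma Vtri_le_norm2sq (rho O : 'M[C]_N) : herm_op rho -> herm_op O ->
  Vtri O rho <= 2 * (d + 1) / (d * (d + 2)) * norm2sq (Xi2 rho O).
Proof.
move=> herm_rho herm_O; have := dotP_tXi_le herm_rho herm_O; have := vcoef_ge0.
by rewrite /Vtri -mulrA -mulrA mulrCA mulrA; nra.
Qed.

Lemma hs_norm_sqr (O : 'M[C]_N) : herm_op O -> hs_norm O ^+ 2 = complex.Re (\tr (O *m O)).
Proof.
move=> herm_O; rewrite /hs_norm herm_O sqr_sqrtr // -(pmulr_rge0 _ (qdim_gt0)).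
by rewrite -sum_Xi_sqr //; apply: sumr_ge0 => P _; exact: sqr_ge0.
Qed.

Lemma sum_Xi_sqr_hs_norm (O : 'M[C]_N) : herm_op O ->
  \sum_P Xi O P ^+ 2 = d * hs_norm O ^+ 2.
Proof. by move=> herm_O; rewrite hs_norm_sqr // sum_Xi_sqr. Qed.

Lemma purity_gt0 (rho : 'M[C]_N) : density_op rho -> 0 < purity rho.
Proof.
move=> dens_rho; rewrite -(pmulr_rgt0 _ qdim_gt0) /purity -sum_Xi_sqr; last exact: dens_rho.1.
rewrite sum_Ilab Xi_density_Ilab // expr1n ltr_pwDl //.
by apply: sumr_ge0 => P _; exact: sqr_ge0.
Qed.

Lemma norm4pow4_Xi_density_ge1 (rho : 'M[C]_N) : density_op rho ->
  1 <= norm4pow4 (Xi rho).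
Proof.
move=> dens_rho; rewrite /norm4pow4 sum_Ilab Xi_density_Ilab // expr1n lerDl.
by apply: sumr_ge0 => P _; rewrite (_ : 4 = 2 * 2)%N // exprM sqr_ge0.
Qed.

Lemma powR2_M2t (rho : 'M[C]_N) : density_op rho ->
  2 `^ (- M2t rho) * d * purity rho = norm4pow4 (Xi rho).
Proof.
move=> dens_rho; have := purity_gt0 dens_rho; have := norm4pow4_Xi_density_ge1 dens_rho.
have := qdim_gt0 => d_gt0 F_ge1 p_gt0.
rewrite /M2t opprK powR2_qlog2; last by apply: divr_gt0; [lra | apply: mulr_gt0].
by rewrite -mulrA divfK // mulf_neq0 // gt_eqF.
Qed.

Lemma Vtri_le_sqrt (rho O : 'M[C]_N) : herm_op O -> density_op rho ->
  Vtri O rho <= 2 * (d + 1) / (d * (d + 2)) *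
        Num.sqrt (2 `^ (- M2t rho) * d * purity rho * norm4pow4 (Xi O)).
Proof.
move=> herm_O dens_rho; rewrite powR2_M2t //.
apply: (le_trans (Vtri_le_norm2sq dens_rho.1 herm_O)); apply: ler_wpM2l.
  by rewrite -mulrA mulr_ge0 // vcoef_ge0.
apply: ler_sqrt_sqr.
  by apply: mulr_ge0; apply: sumr_ge0 => P _; rewrite (_ : 4 = 2 * 2)%N // exprM sqr_ge0.
by rewrite norm2sq_Xi2 !norm4pow4E; exact: cauchy_schwarz.
Qed.

(* Off the identity Xi of rho - 1/d agrees with Xi rho, and at the identity
   Xi O vanishes because O is traceless. *)
Lemma Vtri_le_norminf (rho O : 'M[C]_N) : herm_op O -> \tr O = 0 -> density_op rho ->
  Vtri O rho <= 2 * (d + 1) / (d + 2) * norminf (Xi (ringed rho)) ^+ 2 * hs_norm O ^+ 2.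
Proof.
move=> herm_O tr_O dens_rho; set m := norminf (Xi (ringed rho)).
have W_le : norm2sq (Xi2 rho O) <= m ^+ 2 * (d * hs_norm O ^+ 2).
  rewrite norm2sq_Xi2 -sum_Xi_sqr_hs_norm // mulr_sumr; apply: ler_sum => P _.
  have [->|P_I] := eqVneq P (Ilab n).
    by rewrite [Xi O _]Xi_Ilab tr_O /= expr0n /= !mulr0.
  apply: ler_wpM2r; first exact: sqr_ge0.
  have : `|Xi rho P| <= m.
    have := le_bigmax 0 (fun P => `|Xi (ringed rho) P|) P.
    by rewrite Xi_ringed (negbTE P_I) subr0.
  by rewrite ler_norml => /andP[lb ub]; nra.
apply: (le_trans (Vtri_le_norm2sq dens_rho.1 herm_O)).
apply: (le_trans (ler_wpM2l _ W_le)); first by rewrite -mulrA mulr_ge0 // vcoef_ge0.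
rewrite le_eqVlt; apply/orP; left; apply/eqP.
by field; rewrite qdim_neq0 qdimD2_neq0.
Qed.

Lemma norm2sq_Xi2_le_topd (rho O : 'M[C]_N) : density_op rho ->
  norm2sq (Xi2 rho O) <= topd (Xi O).
Proof.
move=> dens_rho; rewrite norm2sq_Xi2 /topd; apply: weighted_sum_le_bigmax.
- by rewrite expn_gt0.
- by rewrite card_ffun !card_ord (_ : 4 = 2 * 2)%N // expnMn leq_pmulr // expn_gt0.
- by move=> P; exact: sqr_ge0.
- move=> P; have := Xi_density_bound P dens_rho => /andP[? ?].
  by rewrite sqr_ge0 /=; nra.
- rewrite sum_Xi_sqr; last exact: dens_rho.1.
  by rewrite -[X in _ <= X]mulr1 ler_wpM2l ?ler0n //; exact: purity_le1.
Qed.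

Lemma Vmax_le_topd (O : 'M[C]_N) : herm_op O ->
  Vmax O <= 2 * (d + 1) / (d * (d + 2)) * topd (Xi O).
Proof.
move=> herm_O; have c_ge0 : 0 <= 2 * (d + 1) / (d * (d + 2)).
  by rewrite -mulrA mulr_ge0 // vcoef_ge0.
have topd_ge0 : 0 <= topd (Xi O) by exact: bigmax_ge_id.
rewrite /Vmax; set E := [set _ | _ in _]%classic.
have [->|E_neq0] := pselect (E = set0); first by rewrite sup0 mulr_ge0.
apply: ge_sup; first by apply/set0P/eqP.
move=> _ [rho dens_rho <-]; apply: (le_trans (Vtri_le_norm2sq dens_rho.1 herm_O)).
by rewrite ler_wpM2l // norm2sq_Xi2_le_topd.
Qed.

Lemma topd_le_hs_norm (O : 'M[C]_N) : herm_op O ->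
  2 * (d + 1) / (d * (d + 2)) * topd (Xi O) <= 2 * (d + 1) / (d + 2) * hs_norm O ^+ 2.
Proof.
move=> herm_O.
have topd_le : topd (Xi O) <= d * hs_norm O ^+ 2.
  rewrite -sum_Xi_sqr_hs_norm //; apply: bigmax_le => [|S _].
    by apply: sumr_ge0 => P _; exact: sqr_ge0.
  by apply: sum_in_le_sum => P; exact: sqr_ge0.
apply: (le_trans (ler_wpM2l _ topd_le)); first by rewrite -mulrA mulr_ge0 // vcoef_ge0.
rewrite le_eqVlt; apply/orP; left; apply/eqP.
by field; rewrite qdim_neq0 qdimD2_neq0.
Qed.

End VarianceBounds.

Section PureStateObservable.
Variables (R : realType) (n : nat).
Local Notation C := R[i].
Local Notation N := (2 ^ n)%N.
Local Notation d := (qdim R n).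
Variable phi : 'cV[C]_N.
Hypothesis unit_phi : unit_vec phi.
Local Notation rho := (ketbra phi).
Local Notation O := (ringed rho).
Local Notation G := (\sum_(P | P != Ilab n) Xi rho P ^+ 4).

Lemma Xi_ringed_ketbra_Ilab : Xi O (Ilab n) = 0.
Proof.
by rewrite Xi_ringed Xi_density_Ilab ?eqxx ?subrr //; exact: ketbra_density.
Qed.

Lemma Xi_ringed_ketbra P : P != Ilab n -> Xi O P = Xi rho P.
Proof. by move=> P_I; rewrite Xi_ringed (negbTE P_I) subr0. Qed.

Lemma sum_Xi_ketbra_sqr : \sum_(P | P != Ilab n) Xi rho P ^+ 2 = d - 1.
Proof.
apply/eqP; rewrite eq_sym subr_eq addrC -[X in X + _](expr1n _ 2).
rewrite -(Xi_density_Ilab (ketbra_density unit_phi)) -sum_Ilab.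
rewrite sum_Xi_sqr; last exact: ketbra_herm.
by rewrite ketbra_idem // mxtrace_ketbra // mulr1.
Qed.

Lemma norm4pow4_Xi_ketbra : norm4pow4 (Xi rho) = 1 + G.
Proof.
rewrite /norm4pow4 sum_Ilab Xi_density_Ilab ?expr1n //; exact: ketbra_density.
Qed.

Lemma sum_Xi_ketbra_pow4_ge0 : 0 <= G.
Proof. by apply: sumr_ge0 => P _; rewrite (_ : 4 = 2 * 2)%N // exprM sqr_ge0. Qed.

Lemma sum_Xi_ketbra_pow4_le : G <= d - 1.
Proof.
rewrite -sum_Xi_ketbra_sqr; apply: ler_sum => P _.
have := Xi_density_bound P (ketbra_density unit_phi) => /andP[lb ub].
have : Xi rho P ^+ 2 <= 1 by nra.
have : 0 <= Xi rho P ^+ 2 by exact: sqr_ge0.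
by rewrite (_ : 4 = 2 + 2)%N // exprD; set x := Xi rho P ^+ 2; nra.
Qed.

Lemma Vtri_ketbra :
  Vtri O rho = (d + 1) / (d * (d + 2)) * (G + (G - (d - 1) / d)).
Proof.
have norm2sq_G : norm2sq (Xi2 rho O) = G.
  rewrite norm2sq_Xi2 sum_Ilab Xi_ringed_ketbra_Ilab expr0n mulr0 add0r.
  by apply: eq_bigr => P P_I; rewrite Xi_ringed_ketbra // -exprD.
have dotP_G : dotP (tXi rho O) (Xi2 rho O) = G - (d - 1) / d.
  rewrite /dotP sum_Ilab /Xi2 Xi_ringed_ketbra_Ilab !mulr0 add0r.
  rewrite -sum_Xi_ketbra_sqr mulr_suml -sumrB; apply: eq_bigr => P P_I.
  rewrite tXi_ketbra_ringed // Xi_ringed_ketbra // (_ : 4 = 2 + 2)%N // exprD; ring.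
by rewrite /Vtri norm2sq_G dotP_G.
Qed.

Lemma M2_ketbra : M2 phi = - qlog2 ((1 + G) / d).
Proof. by rewrite /M2 /M2t (purity_ketbra unit_phi) mulr1 norm4pow4_Xi_ketbra. Qed.

Lemma powR2_1BM2 : 2 `^ (1 - M2 phi) = 2 * ((1 + G) / d).
Proof.
rewrite M2_ketbra opprK powR2_1Dqlog2 // divr_gt0 ?qdim_gt0 //.
by have := sum_Xi_ketbra_pow4_ge0; lra.
Qed.

Lemma powR2_1Bhalf_M2 : 2 `^ (1 - M2 phi / 2) = 2 * Num.sqrt ((1 + G) / d).
Proof.
rewrite M2_ketbra mulNr opprK powR2_1Dhalf_qlog2 // divr_gt0 ?qdim_gt0 //.
by have := sum_Xi_ketbra_pow4_ge0; lra.
Qed.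

Lemma Vtri_ketbra_closed_form : Vtri O rho
  = (2 `^ (1 - M2 phi) * d ^+ 2 - 3 * d + 1) * (d + 1) / (d ^+ 2 * (d + 2)).
Proof.
by rewrite Vtri_ketbra powR2_1BM2; field; rewrite qdim_neq0 qdimD2_neq0.
Qed.

Lemma Vtri_ketbra_gt : 2 `^ (1 - M2 phi) - 5 / d < Vtri O rho.
Proof.
have := sum_Xi_ketbra_pow4_le; have := qdim_gt0 R n.
rewrite Vtri_ketbra powR2_1BM2 => d_gt0 G_le.
have gap : (d + 1) / (d * (d + 2)) * (G + (G - (d - 1) / d)) - (2 * ((1 + G) / d) - 5 / d)
    = (2 * d ^+ 2 + 8 * d + 1 - 2 * (1 + G) * d) / (d ^+ 2 * (d + 2)).
  by field; rewrite qdim_neq0 qdimD2_neq0.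
have : 0 < (2 * d ^+ 2 + 8 * d + 1 - 2 * (1 + G) * d) / (d ^+ 2 * (d + 2)).
  by apply: divr_gt0; [nra | apply: mulr_gt0; [apply: exprn_gt0 | ]; lra].
by lra.
Qed.

Lemma Vtri_ketbra_lt : (1 <= n)%N -> Vtri O rho < 2 `^ (1 - M2 phi) - 2 / d.
Proof.
move=> n_gt0; have := sum_Xi_ketbra_pow4_ge0; have := qdim_ge2 R n_gt0.
rewrite Vtri_ketbra powR2_1BM2 => d_ge2 G_ge0.
have gap : 2 * ((1 + G) / d) - 2 / d - (d + 1) / (d * (d + 2)) * (G + (G - (d - 1) / d))
    = (2 * (1 + G) * d + d ^+ 2 - 2 * d - 1) / (d ^+ 2 * (d + 2)).
  by field; rewrite qdim_neq0 qdimD2_neq0.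
have : 0 < (2 * (1 + G) * d + d ^+ 2 - 2 * d - 1) / (d ^+ 2 * (d + 2)).
  by apply: divr_gt0; [nra | apply: mulr_gt0; [apply: exprn_gt0 | ]; lra].
by lra.
Qed.

Lemma topd_Xi_ringed_ketbra_le : topd (Xi O) <= Num.sqrt (d * G).
Proof.
apply: bigmax_le => [|S /eqP card_S]; first exact: sqrtr_ge0.
apply: ler_sqrt_sqr; first by rewrite mulr_ge0 ?sum_Xi_ketbra_pow4_ge0 // ltW // qdim_gt0.
have := sum_sqr_le_card S (fun P => Xi O P ^+ 2); rewrite card_S.
suff -> : \sum_P (Xi O P ^+ 2) ^+ 2 = G by [].
rewrite sum_Ilab Xi_ringed_ketbra_Ilab expr0n /= expr0n add0r.
by apply: eq_bigr => P P_I; rewrite Xi_ringed_ketbra // -exprM.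
Qed.

Lemma Vmax_ketbra_lt : Vmax O < 2 `^ (1 - M2 phi / 2) * (d + 1) / (d + 2).
Proof.
have := sum_Xi_ketbra_pow4_ge0; have := qdim_gt0 R n => d_gt0 G_ge0.
have herm_O : herm_op O by apply: ringed_herm; exact: ketbra_herm.
apply: (le_lt_trans (Vmax_le_topd herm_O)).
have c_gt0 : 0 < 2 * (d + 1) / (d * (d + 2)).
  by apply: divr_gt0; [lra | apply: mulr_gt0; lra].
apply: (le_lt_trans (ler_wpM2l (ltW c_gt0) topd_Xi_ringed_ketbra_le)).
have sqrt_lt : Num.sqrt (d * G) < d * Num.sqrt ((1 + G) / d).
  have -> : d * Num.sqrt ((1 + G) / d) = Num.sqrt (d * (1 + G)).
    rewrite (_ : d * (1 + G) = d ^+ 2 * ((1 + G) / d)); last by field; rewrite qdim_neq0.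
    by rewrite [RHS]sqrtrM ?sqr_ge0 // sqrtr_sqr ger0_norm // ltW.
  by rewrite ltr_sqrt; [lra | apply: mulr_gt0; lra].
apply: (@lt_le_trans _ _ (2 * (d + 1) / (d * (d + 2)) * (d * Num.sqrt ((1 + G) / d)))).
  by rewrite ltr_pM2l.
rewrite powR2_1Bhalf_M2 le_eqVlt; apply/orP; left; apply/eqP.
by field; rewrite qdim_neq0 qdimD2_neq0.
Qed.

End PureStateObservable.

Local Open Scope classical_set_scope.

Theorem mainTheorem16 (R : realType) (n : nat) (hn : (1 <= n)%N)
  (O : 'M[R[i]]_(2 ^ n)) (hO : herm_op O) (trO : \tr O = 0) :
  let d := qdim R n in
  (forall rho : 'M[R[i]]_(2 ^ n), density_op rho ->
     Vtri O rho <= 2 * (d + 1) / (d * (d + 2)) *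
        Num.sqrt (2 `^ (- M2t rho) * d * purity rho * norm4pow4 (Xi O))
     /\ Vtri O rho <= 2 * (d + 1) / (d + 2) *
        norminf (Xi (ringed rho)) ^+ 2 * hs_norm O ^+ 2)
  /\ Vmax O <= 2 * (d + 1) / (d * (d + 2)) * topd (Xi O)
  /\ 2 * (d + 1) / (d * (d + 2)) * topd (Xi O) <= 2 * (d + 1) / (d + 2) * hs_norm O ^+ 2
  /\ (forall phi : 'cV[R[i]]_(2 ^ n), unit_vec phi ->
        O = ketbra phi - (real_complex R (d^-1))%:M ->
        Vmax O < 2 `^ (1 - M2 phi / 2) * (d + 1) / (d + 2)
        /\ 2 `^ (1 - M2 phi) - 5 / d < Vtri O (ketbra phi)
        /\ Vtri O (ketbra phi)
             = (2 `^ (1 - M2 phi) * d ^+ 2 - 3 * d + 1) * (d + 1) / (d ^+ 2 * (d + 2))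
        /\ Vtri O (ketbra phi) < 2 `^ (1 - M2 phi) - 2 / d).
Proof.
move=> d; split.
  by move=> rho dens_rho; split; [exact: Vtri_le_sqrt | exact: Vtri_le_norminf].
split; first exact: Vmax_le_topd.
split; first exact: topd_le_hs_norm.
move=> phi unit_phi ->; rewrite -/(ringed (ketbra phi)).
split; first exact: Vmax_ketbra_lt.
split; first exact: Vtri_ketbra_gt.
by split; [exact: Vtri_ketbra_closed_form | exact: Vtri_ketbra_lt].
Qed.
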